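(* Let $R$ be a regular run. If Dir is set to close at some moment $\alpha$, then Dir = close over the interval $(\alpha,\alpha+d_{close})$.
   Context: Setting (evolving algebra for the railroad crossing). States are structures over a vocabulary containing: a finite universe Tracks; the reals and ExtendedReals $=\mathbb{R}\cup\{\infty\}$ with standard $<$ and $+$ ($\infty$ largest); a nullary real-valued symbol $\mathrm{CT}$ (current time); positive real constants $d_{close},d_{open},d_{min},d_{max}$ with $d_{close}<d_{min}\le d_{max}$; a unary function TrackStatus from Tracks to $\{\text{empty},\text{coming},\text{incrossing}\}$; a unary function Deadline from Tracks to ExtendedReals; a nullary Dir with values in $\{\text{open},\text{close}\}$; a nullary GateStatus with values in $\{\text{opened},\text{closed}\}$. Put $W=d_{min}-d_{close}$ and $\Delta_{close}=d_{close}+(d_{max}-d_{min})=d_{max}-W$. For a track $x$, $s(x)$ is the condition [$\mathrm{TrackStatus}(x)=\text{empty}$ or $\mathrm{CT}+d_{open}<\mathrm{Deadline}(x)$], and SafeToOpen is $\forall x\in\mathrm{Tracks}\ s(x)$. The program has two modules (agents). Gate: simultaneously OpenGate ''if Dir=open then GateStatus:=opened'' and CloseGate ''if Dir=close then GateStatus:=closed''. Controller: simultaneously, for every track $x$, SetDeadline$(x)$ ''if TrackStatus$(x)$=coming and Deadline$(x)=\infty$ then Deadline$(x):=\mathrm{CT}+W$'', SignalClose$(x)$ ''if $\mathrm{CT}=$Deadline$(x)$ then Dir:=close'', ClearDeadline$(x)$ ''if TrackStatus$(x)$=empty and Deadline$(x)<\infty$ then Deadline$(x):=\infty$'', together with SignalOpen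 ''if Dir=close and SafeToOpen then Dir:=open''. Executing a module means computing all updates it generates in the current state and performing them simultaneously (nothing happens if the update set is inconsistent). A module is enabled at a state if its update set is consistent and contains an update that changes the state. TrackStatus is external (changed only by the environment); Deadline, Dir, GateStatus are internal (changed only by the modules); other symbols are static. Runs: for $t\mapsto R(t)$, $t\in[0,\infty)$, let $\rho(t)$ be the reduct of $R(t)$ without CT. $R$ is a pre-run if all $R(t)$ share a superuniverse, $\mathrm{CT}=t$ in $R(t)$, and for every $\tau>0$ there are $0=t_0<\dots<t_n=\tau$ with $\rho$ constant on each $(t_i,t_{i+1})$. For a term $e$ (free variables fixed), $e_t$ is its value in $R(t)$, $e_{t+}$ (resp. $e_{t-}$, $t>0$) its constant value on some $(t,t+\epsilon)$ (resp. $(t-\epsilon,t)$); likewise $\rho(t\pm)$. $e$ holds over an interval if it holds at each point; $e$ becomes (is set to) $a$ at $t$ if $e_{t-}\ne a=e_t$ or $e_t\neq a=e_{t+}$. A pre-run is a run if (i) whenever $\rho(t+)\neq\rho(t)$, $\rho(t+)$ is the CT-free reduct of the result of executing some modules at $R(t)$ (these agents fire at $t$), with external functions equal in $\rho(t)$ and $\rho(t+)$; (ii) whenever $t>0$ and $\rho(t)\ne\rho(t-)$, they differ only in external functions. An agent is immediate if it fires at every moment it is enabled; bounded if immediate or there is $b>0$ with no interval $(t,t+b)$ over which it is enabled but never fires. Initial states: TrackStatus$(x)$=empty and Deadline$(x)=\infty$ for every track $x$. A regular run is a run $R$ with $R(0)$ initial such that: (Train Motion) for each track $x$ there is a finite or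 infinite sequence $0=t_0<t_1<t_2<\cdots$ (the significant moments of $x$) with TrackStatus$(x)$=empty over each $[t_{3i},t_{3i+1})$, =coming over each $[t_{3i+1},t_{3i+2})$ where $d_{min}\le t_{3i+2}-t_{3i+1}\le d_{max}$, =incrossing over each $[t_{3i+2},t_{3i+3})$, and, if the sequence is finite with last element $t_k$, then $3\mid k$ and TrackStatus$(x)$=empty over $[t_k,\infty)$; (Controller Timing) Controller is immediate; (Gate Timing) Gate is bounded, there is no interval $(t,t+d_{close})$ over which Dir=close and GateStatus=opened both hold, and no interval $(t,t+d_{open})$ over which Dir=open and GateStatus=closed both hold. *)

From Stdlib Require Import Reals FinFun.
Open Scope R_scope.

Inductive tstatus := Empty | Coming | InCrossing.
Inductive dirv := DOpen | DClose.
Inductive gatev := Opened | Closed.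
Inductive agent := Gate | Controller.

Section RailroadCrossing.

Variable Tracks : Type.

(* CT-free part of a state.  ExtendedReals = option R, with None = infinity. *)
Record state := mkState {
  TrackStatus : Tracks -> tstatus;
  Deadline : Tracks -> option R;
  Dir : dirv;
  GateStatus : gatev }.

Variables dclose dopen dmin dmax : R.

Definition W : R := dmin - dclose.

Inductive loc := LDeadline (x : Tracks) | LDir | LGate.
Inductive val := VDeadline (e : option R) | VDir (d : dirv) | VGate (g : gatev).

Definition content (s : state) (l : loc) : val :=
  match l with
  | LDeadline x => VDeadline (Deadline s x)
  | LDir => VDir (Dir s)
  | LGate => VGate (GateStatus s)
  end.

Definition updset := loc -> val -> Prop.

Definition s_cond (t : R) (s : state) (x : Tracks) : Prop :=
  TrackStatus s x = Empty \/
  match Deadline s x with None => True | Some d => t + dopen < d end.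

Definition SafeToOpen (t : R) (s : state) : Prop := forall x, s_cond t s x.

Definition OpenGate (s : state) : updset := fun l v =>
  Dir s = DOpen /\ l = LGate /\ v = VGate Opened.
Definition CloseGate (s : state) : updset := fun l v =>
  Dir s = DClose /\ l = LGate /\ v = VGate Closed.
Definition GateU (s : state) : updset := fun l v =>
  OpenGate s l v \/ CloseGate s l v.

Definition SetDeadline (t : R) (s : state) (x : Tracks) : updset := fun l v =>
  TrackStatus s x = Coming /\ Deadline s x = None /\
  l = LDeadline x /\ v = VDeadline (Some (t + W)).
Definition SignalClose (t : R) (s : state) (x : Tracks) : updset := fun l v =>
  Deadline s x = Some t /\ l = LDir /\ v = VDir DClose.
Definition ClearDeadline (s : state) (x : Tracks) : updset := fun l v =>
  TrackStatus s x = Empty /\ Deadline s x <> None /\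
  l = LDeadline x /\ v = VDeadline None.
Definition SignalOpen (t : R) (s : state) : updset := fun l v =>
  Dir s = DClose /\ SafeToOpen t s /\ l = LDir /\ v = VDir DOpen.
Definition ControllerU (t : R) (s : state) : updset := fun l v =>
  (exists x, SetDeadline t s x l v \/ SignalClose t s x l v \/ ClearDeadline s x l v)
  \/ SignalOpen t s l v.

Definition updates (a : agent) (t : R) (s : state) : updset :=
  match a with Gate => GateU s | Controller => ControllerU t s end.

Definition consistent (U : updset) : Prop :=
  forall l v1 v2, U l v1 -> U l v2 -> v1 = v2.

Definition enabled_at (a : agent) (t : R) (s : state) : Prop :=
  consistent (updates a t s) /\
  exists l v, updates a t s l v /\ content s l <> v.

Definition performs (U : updset) (s s' : state) : Prop :=
  TrackStatus s' = TrackStatus s /\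
  forall l, (forall v, U l v -> content s' l = v) /\
            ((forall v, ~ U l v) -> content s' l = content s l).

Definition exec_modules (S : agent -> Prop) (t : R) (s s' : state) : Prop :=
  performs (fun l v => exists a, S a /\ consistent (updates a t s) /\ updates a t s l v) s s'.

(* rho t is the CT-free reduct of R(t); CT = t implicitly. *)

Definition pre_run (rho : R -> state) : Prop :=
  forall tau, 0 < tau ->
  exists (n : nat) (ts : nat -> R),
    ts 0%nat = 0 /\ ts n = tau /\
    (forall i, (i < n)%nat -> ts i < ts (S i)) /\
    (forall i, (i < n)%nat -> forall u v,
        ts i < u < ts (S i) -> ts i < v < ts (S i) -> rho u = rho v).

Definition right_val (rho : R -> state) (t : R) (s : state) : Prop :=
  exists eps, 0 < eps /\ forall u, t < u < t + eps -> rho u = s.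
Definition left_val (rho : R -> state) (t : R) (s : state) : Prop :=
  exists eps, 0 < eps /\ forall u, t - eps < u < t -> rho u = s.

(* F t is the set of agents executed at t *)
Definition is_run (rho : R -> state) (F : R -> agent -> Prop) : Prop :=
  pre_run rho /\
  (forall t s, 0 <= t -> right_val rho t s -> s <> rho t ->
     exec_modules (F t) t (rho t) s /\ TrackStatus s = TrackStatus (rho t)) /\
  (forall t s, 0 < t -> left_val rho t s -> s <> rho t ->
     Deadline s = Deadline (rho t) /\ Dir s = Dir (rho t) /\
     GateStatus s = GateStatus (rho t)).

Definition fires (rho : R -> state) (F : R -> agent -> Prop) (a : agent) (t : R) : Prop :=
  F t a /\ exists s, right_val rho t s /\ s <> rho t.

Definition immediate (rho : R -> state) (F : R -> agent -> Prop) (a : agent) : Prop :=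
  forall t, 0 <= t -> enabled_at a t (rho t) -> fires rho F a t.

Definition bounded (rho : R -> state) (F : R -> agent -> Prop) (a : agent) : Prop :=
  immediate rho F a \/
  exists b, 0 < b /\
    ~ (exists t, 0 <= t /\
         (forall u, t < u < t + b -> enabled_at a u (rho u)) /\
         (forall u, t < u < t + b -> ~ fires rho F a u)).

Definition initial (s : state) : Prop :=
  forall x, TrackStatus s x = Empty /\ Deadline s x = None.

(* significant moments ts 0, ts 1, ...; len = None: infinite sequence,
   len = Some k: finite sequence with last element ts k *)
Definition valid_index (len : option nat) (j : nat) : Prop :=
  match len with None => True | Some k => (j <= k)%nat end.

Definition train_motion (rho : R -> state) (x : Tracks) : Prop :=
  exists (ts : nat -> R) (len : option nat),
    ts 0%nat = 0 /\
    (forall j, valid_index len (S j) -> ts j < ts (S j)) /\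
    (forall i, valid_index len (3 * i + 1) ->
       forall u, ts (3 * i)%nat <= u < ts (3 * i + 1)%nat ->
         TrackStatus (rho u) x = Empty) /\
    (forall i, valid_index len (3 * i + 2) ->
       (forall u, ts (3 * i + 1)%nat <= u < ts (3 * i + 2)%nat ->
         TrackStatus (rho u) x = Coming) /\
       dmin <= ts (3 * i + 2)%nat - ts (3 * i + 1)%nat <= dmax) /\
    (forall i, valid_index len (3 * i + 3) ->
       forall u, ts (3 * i + 2)%nat <= u < ts (3 * i + 3)%nat ->
         TrackStatus (rho u) x = InCrossing) /\
    (forall k, len = Some k ->
       Nat.modulo k 3 = 0%nat /\
       forall u, ts k <= u -> TrackStatus (rho u) x = Empty).

Definition regular_run (rho : R -> state) (F : R -> agent -> Prop) : Prop :=
  is_run rho F /\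
  initial (rho 0) /\
  (forall x, train_motion rho x) /\
  immediate rho F Controller /\
  bounded rho F Gate /\
  ~ (exists t, 0 <= t /\ forall u, t < u < t + dclose ->
        Dir (rho u) = DClose /\ GateStatus (rho u) = Opened) /\
  ~ (exists t, 0 <= t /\ forall u, t < u < t + dopen ->
        Dir (rho u) = DOpen /\ GateStatus (rho u) = Closed).

Definition Dir_set_to (rho : R -> state) (d : dirv) (t : R) : Prop :=
  (0 < t /\ exists s, left_val rho t s /\ Dir s <> d /\ Dir (rho t) = d) \/
  (Dir (rho t) <> d /\ exists s, right_val rho t s /\ Dir s = d).

End RailroadCrossing.

(* Dir can only become close through SignalClose, fired at [alpha] by a track [y] whose
   deadline is [alpha].  Because the Controller is immediate, it sets a deadline [t + W]
   exactly at the moment [t] a track starts coming; a run invariant, proved by continuous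
   induction, then says that a track holding deadline [d] is coming throughout
   [[d - W, d + dclose)], an interval of length [dmin].  So during [(alpha, alpha + dclose)]
   track [y] is coming and keeps deadline [alpha], which makes SafeToOpen false: SignalOpen
   cannot fire and Dir stays close. *)

From Stdlib Require Import Reals FinFun Lra Lia Classical.
Open Scope R_scope.

#[local] Arguments TrackStatus {Tracks}.
#[local] Arguments Deadline {Tracks}.
#[local] Arguments Dir {Tracks}.
#[local] Arguments content {Tracks}.
#[local] Arguments LDeadline {Tracks}.
#[local] Arguments LDir {Tracks}.
#[local] Arguments right_val {Tracks}.
#[local] Arguments left_val {Tracks}.
#[local] Arguments pre_run {Tracks}.
#[local] Arguments is_run {Tracks}.
#[local] Arguments exec_modules {Tracks}.
#[local] Arguments updates {Tracks}.
#[local] Arguments consistent {Tracks}.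
#[local] Arguments enabled_at {Tracks}.
#[local] Arguments SafeToOpen {Tracks}.
#[local] Arguments immediate {Tracks}.
#[local] Arguments train_motion {Tracks}.
#[local] Arguments initial {Tracks}.
#[local] Arguments Dir_set_to {Tracks}.

Lemma real_induction (P : R -> Prop) :
  P 0 ->
  (forall t, 0 < t -> (forall w, 0 <= w < t -> P w) -> P t) ->
  (forall t, 0 <= t -> (forall w, 0 <= w <= t -> P w) ->
     exists eps, 0 < eps /\ forall w, t < w < t + eps -> P w) ->
  forall t, 0 <= t -> P t.
Proof.
  intros P0 Pleft Pright t0 t0_ge0.
  apply NNPP; intro not_Pt0.
  set (E := fun s => 0 <= s /\ forall w, 0 <= w <= s -> P w).
  assert (E_bound : bound E).
  { exists t0; intros s [s_ge0 Ps].
    destruct (Rle_lt_dec s t0) as [|lt_t0_s]; [assumption|].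
    exfalso; apply not_Pt0, Ps; lra. }
  assert (E0 : E 0).
  { split; [lra|]; intros w w_0; replace w with 0 by lra; exact P0. }
  destruct (completeness E E_bound (ex_intro _ 0 E0)) as [m [m_ub m_lub]].
  assert (m_ge0 : 0 <= m) by exact (m_ub 0 E0).
  assert (P_below : forall w, 0 <= w < m -> P w).
  { intros w w_m; apply NNPP; intro not_Pw.
    enough (m <= w) by lra.
    apply m_lub; intros s [_ Ps].
    destruct (Rle_lt_dec s w) as [|lt_w_s]; [assumption|].
    exfalso; apply not_Pw, Ps; lra. }
  assert (P_upto : forall w, 0 <= w <= m -> P w).
  { intros w [w_ge0 [w_lt_m | ->]]; [now apply P_below|].
    destruct (Rle_lt_or_eq_dec 0 m m_ge0) as [m_pos|<-]; [now apply Pleft|exact P0]. }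
  destruct (Pright m m_ge0 P_upto) as [eps [eps_pos P_after]].
  assert (E (m + eps / 2)).
  { split; [lra|]; intros w w_range.
    destruct (Rle_lt_dec w m); [apply P_upto | apply P_after]; lra. }
  enough (m + eps / 2 <= m) by lra.
  now apply m_ub.
Qed.

Lemma partition_cell_co (f : nat -> R) t n :
  f 0%nat <= t -> t < f n -> exists i, (i < n)%nat /\ f i <= t < f (S i).
Proof.
  induction n as [|n IHn]; intros ge_f0 lt_fn; [lra|].
  destruct (Rlt_le_dec t (f n)) as [lt|le].
  - destruct (IHn ge_f0 lt) as [i [i_lt cell]]; exists i; split; [lia|exact cell].
  - exists n; split; [lia|lra].
Qed.

Lemma partition_cell_oc (f : nat -> R) t n :
  f 0%nat < t -> t <= f n -> exists i, (i < n)%nat /\ f i < t <= f (S i).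
Proof.
  induction n as [|n IHn]; intros gt_f0 le_fn; [lra|].
  destruct (Rle_lt_dec t (f n)) as [le|lt].
  - destruct (IHn gt_f0 le) as [i [i_lt cell]]; exists i; split; [lia|exact cell].
  - exists n; split; [lia|lra].
Qed.

Section PreRun.

Variables (Tracks : Type) (rho : R -> state Tracks).
Hypothesis rho_pre_run : pre_run rho.

Lemma pre_run_right_val t : 0 <= t -> exists s, right_val rho t s.
Proof.
  intros t_ge0.
  destruct (rho_pre_run (t + 1)) as [n [ts [ts0 [tsn [_ const]]]]]; [lra|].
  destruct (partition_cell_co ts t n) as [i [i_lt cell]]; [lra|lra|].
  exists (rho ((t + ts (S i)) / 2)), (ts (S i) - t); split; [lra|].
  intros u u_range; apply (const i i_lt); lra.
Qed.

Lemma pre_run_left_val t : 0 < t -> exists s, left_val rho t s.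
Proof.
  intros t_pos.
  destruct (rho_pre_run t t_pos) as [n [ts [ts0 [tsn [_ const]]]]].
  destruct (partition_cell_oc ts t n) as [i [i_lt cell]]; [lra|lra|].
  exists (rho ((t + ts i) / 2)), (t - ts i); split; [lra|].
  intros u u_range; apply (const i i_lt); lra.
Qed.

End PreRun.

Lemma right_val_unique Tracks (rho : R -> state Tracks) t s1 s2 :
  right_val rho t s1 -> right_val rho t s2 -> s1 = s2.
Proof.
  intros [e1 [e1_pos rho_s1]] [e2 [e2_pos rho_s2]].
  pose proof (Rmin_l e1 e2); pose proof (Rmin_r e1 e2).
  pose proof (Rmin_pos e1 e2 e1_pos e2_pos).
  rewrite <- (rho_s1 (t + Rmin e1 e2 / 2)), <- (rho_s2 (t + Rmin e1 e2 / 2)); auto; lra.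
Qed.

Section Execution.

Variables (Tracks : Type) (dclose dopen dmin : R).
Variables (S : agent -> Prop) (t : R) (s s' : state Tracks).
Hypothesis exec : exec_modules dclose dopen dmin S t s s'.

Lemma exec_content_cases l :
  content s' l = content s l \/
  exists a v, S a /\ updates dclose dopen dmin a t s l v /\ content s' l = v.
Proof.
  destruct exec as [_ exec_l]; destruct (exec_l l) as [updated untouched].
  destruct (classic (exists v a, S a /\ consistent (updates dclose dopen dmin a t s)
                                 /\ updates dclose dopen dmin a t s l v))
    as [[v [a [Sa [cons upd]]]] | none].
  - right; exists a, v; split; [exact Sa|]; split; [exact upd|].
    apply updated; now exists a.
  - left; apply untouched; intros v upd; apply none; now exists v.
Qed.

Lemma exec_content_update a l v :
  S a -> consistent (updates dclose dopen dmin a t s) ->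
  updates dclose dopen dmin a t s l v -> content s' l = v.
Proof.
  intros Sa cons upd; destruct exec as [_ exec_l].
  apply (proj1 (exec_l l)); now exists a.
Qed.

Lemma exec_Deadline_cases x :
  Deadline s' x = Deadline s x \/
  (TrackStatus s x = Coming /\ Deadline s x = None /\
     Deadline s' x = Some (t + W dclose dmin)) \/
  (TrackStatus s x = Empty /\ Deadline s' x = None).
Proof.
  destruct (exec_content_cases (LDeadline x)) as [same | [a [v [_ [upd new]]]]].
  - left; now injection same.
  - destruct a as [|]; simpl in upd.
    + destruct upd as [[_ [l_eq _]] | [_ [l_eq _]]]; discriminate.
    + destruct upd as [[y [upd | [upd | upd]]] | [_ [_ [l_eq _]]]]; [| | |discriminate].
      * destruct upd as [coming [none [l_eq ->]]]; injection l_eq as <-.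
        injection new as new; auto.
      * destruct upd as [_ [l_eq _]]; discriminate.
      * destruct upd as [empty [_ [l_eq ->]]]; injection l_eq as <-.
        injection new as new; auto.
Qed.

Lemma exec_Dir_cases :
  Dir s' = Dir s \/
  (exists y, Deadline s y = Some t /\ Dir s' = DClose) \/
  (Dir s = DClose /\ SafeToOpen dopen t s /\ Dir s' = DOpen).
Proof.
  destruct (exec_content_cases LDir) as [same | [a [v [_ [upd new]]]]].
  - left; now injection same.
  - destruct a as [|]; simpl in upd.
    + destruct upd as [[_ [l_eq _]] | [_ [l_eq _]]]; discriminate.
    + destruct upd as [[y [upd | [upd | upd]]] | upd].
      * destruct upd as [_ [_ [l_eq _]]]; discriminate.
      * destruct upd as [deadline [_ ->]]; injection new as new; eauto.
      * destruct upd as [_ [_ [l_eq _]]]; discriminate.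
      * destruct upd as [close [safe [_ ->]]]; injection new as new; auto.
Qed.

End Execution.

(* The only genuine conflict is SignalClose against SignalOpen on [Dir]; the hypothesis makes
   the track that is due violate SafeToOpen. *)
Lemma Controller_consistent Tracks dclose dopen dmin t (s : state Tracks) :
  0 < dopen ->
  (forall y, Deadline s y = Some t -> TrackStatus s y <> Empty) ->
  consistent (updates dclose dopen dmin Controller t s).
Proof.
  intros dopen_pos no_empty_due l v1 v2 upd1 upd2; simpl in upd1, upd2.
  destruct upd1 as [[x1 [A|[A|A]]]|A]; destruct upd2 as [[x2 [B|[B|B]]]|B];
  unfold SetDeadline, SignalClose, ClearDeadline, SignalOpen in *;
  repeat match goal with H : _ /\ _ |- _ => destruct H end; subst; try congruence;
  match goal with
  | due : Deadline s ?x = Some t, safe : SafeToOpen _ _ _ |- _ =>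
      destruct (safe x) as [empty|late];
      [exfalso; exact (no_empty_due x due empty) | rewrite due in late; lra]
  end.
Qed.

Lemma due_coming_not_SafeToOpen Tracks dopen t (s : state Tracks) y d :
  TrackStatus s y = Coming -> Deadline s y = Some d -> d <= t + dopen ->
  ~ SafeToOpen dopen t s.
Proof.
  intros coming due due_soon safe.
  destruct (safe y) as [empty | late]; [congruence|].
  rewrite due in late; lra.
Qed.

Section SignificantMoments.

Variables (Tracks : Type) (dmin dmax : R) (rho : R -> state Tracks) (x : Tracks).
Variables (ts : nat -> R) (len : option nat).
Hypothesis dmin_pos : 0 < dmin.
Hypotheses (ts0 : ts 0%nat = 0)
  (ts_incr : forall j, valid_index len (S j) -> ts j < ts (S j))
  (empty_phase : forall i, valid_index len (3 * i + 1) ->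
     forall u, ts (3 * i)%nat <= u < ts (3 * i + 1)%nat -> TrackStatus (rho u) x = Empty)
  (coming_phase : forall i, valid_index len (3 * i + 2) ->
     (forall u, ts (3 * i + 1)%nat <= u < ts (3 * i + 2)%nat ->
        TrackStatus (rho u) x = Coming) /\
     dmin <= ts (3 * i + 2)%nat - ts (3 * i + 1)%nat <= dmax)
  (crossing_phase : forall i, valid_index len (3 * i + 3) ->
     forall u, ts (3 * i + 2)%nat <= u < ts (3 * i + 3)%nat ->
       TrackStatus (rho u) x = InCrossing)
  (final_phase : forall k, len = Some k ->
     Nat.modulo k 3 = 0%nat /\ forall u, ts k <= u -> TrackStatus (rho u) x = Empty).

(* Each cycle empty-coming-incrossing lasts at least [dmin]. *)
Lemma moments_lower_bound : len = None -> forall i, INR i * dmin <= ts (3 * i + 1)%nat.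
Proof.
  intros -> i; induction i as [|i IHi].
  - pose proof (ts_incr 0 I); simpl in *; lra.
  - rewrite S_INR.
    pose proof (proj2 (coming_phase i I)).
    pose proof (ts_incr (3 * i + 2) I); pose proof (ts_incr (3 * i + 3) I).
    replace (S (3 * i + 2)) with (3 * i + 3)%nat in * by lia.
    replace (S (3 * i + 3)) with (3 * S i + 1)%nat in * by lia.
    lra.
Qed.

Lemma moment_cell t : 0 <= t ->
  exists k, valid_index len k /\ ts k <= t /\ (valid_index len (S k) -> t < ts (S k)).
Proof.
  intros t_ge0.
  assert (len_cases : len = None \/ exists K, len = Some K)
    by (destruct len; eauto).
  destruct len_cases as [len_none | [K len_K]].
  - destruct (INR_archimed dmin t dmin_pos) as [i t_lt].
    pose proof (moments_lower_bound len_none i).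
    destruct (partition_cell_co ts t (3 * i + 1)) as [k [_ cell]]; [lra|lra|].
    exists k; rewrite len_none; simpl; tauto.
  - rewrite len_K; simpl.
    destruct (Rle_lt_dec (ts K) t) as [after|before].
    + exists K; repeat split; [lia|exact after|lia].
    + destruct (partition_cell_co ts t K) as [i [i_lt cell]]; [lra|exact before|].
      exists i; split; [lia|tauto].
Qed.

Lemma last_moment k : valid_index len k -> ~ valid_index len (S k) ->
  Nat.modulo k 3 = 0%nat /\ forall u, ts k <= u -> TrackStatus (rho u) x = Empty.
Proof.
  destruct len as [K|] eqn:len_eq; simpl; [|tauto].
  intros k_le not_lt; replace k with K by lia; exact (final_phase K eq_refl).
Qed.

Lemma coming_phase_around t : 0 <= t -> TrackStatus (rho t) x = Coming ->
  exists c e, c <= t < e /\ c + dmin <= e /\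
    forall w, c <= w < e -> TrackStatus (rho w) x = Coming.
Proof.
  intros t_ge0 coming_t.
  destruct (moment_cell t t_ge0) as [k [k_valid [ts_k_le next]]].
  destruct (classic (valid_index len (S k))) as [valid | invalid].
  2: { destruct (last_moment k k_valid invalid) as [_ empty].
       now rewrite (empty t ts_k_le) in coming_t. }
  specialize (next valid).
  assert (k_cases : exists q, (k = 3 * q \/ k = 3 * q + 1 \/ k = 3 * q + 2)%nat)
    by (exists (k / 3)%nat; pose proof (Nat.div_mod_eq k 3);
        pose proof (Nat.mod_upper_bound k 3); lia).
  destruct k_cases as [q [-> | [-> | ->]]].
  - replace (S (3 * q)) with (3 * q + 1)%nat in * by lia.
    now rewrite (empty_phase q valid t) in coming_t by lra.
  - replace (S (3 * q + 1)) with (3 * q + 2)%nat in * by lia.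
    destruct (coming_phase q valid) as [coming long].
    exists (ts (3 * q + 1)%nat), (ts (3 * q + 2)%nat); repeat split; auto; lra.
  - replace (S (3 * q + 2)) with (3 * q + 3)%nat in * by lia.
    now rewrite (crossing_phase q valid t) in coming_t by lra.
Qed.

End SignificantMoments.

Lemma train_motion_coming_phase Tracks dmin dmax (rho : R -> state Tracks) x t :
  0 < dmin -> train_motion dmin dmax rho x -> 0 <= t -> TrackStatus (rho t) x = Coming ->
  exists c e, c <= t < e /\ c + dmin <= e /\
    forall w, c <= w < e -> TrackStatus (rho w) x = Coming.
Proof.
  intros dmin_pos (ts & len & motion); decompose record motion.
  eapply coming_phase_around; eauto.
Qed.

Section RegularRun.

Variables (Tracks : Type) (dclose dopen dmin dmax : R).
Hypotheses (dclose_pos : 0 < dclose) (dopen_pos : 0 < dopen) (dclose_lt_dmin : dclose < dmin).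
Variables (rho : R -> state Tracks) (F : R -> agent -> Prop).
Hypotheses (rho_run : is_run dclose dopen dmin rho F) (rho_initial : initial (rho 0))
  (rho_trains : forall x, train_motion dmin dmax rho x)
  (Controller_immediate : immediate dclose dopen dmin rho F Controller).

Lemma right_val_exec t s : 0 <= t -> right_val rho t s ->
  TrackStatus s = TrackStatus (rho t) /\
  (s = rho t \/ exec_modules dclose dopen dmin (F t) t (rho t) s).
Proof.
  intros t_ge0 right; destruct (classic (s = rho t)) as [-> | changed]; [auto|].
  destruct rho_run as [_ [step _]]; destruct (step t s t_ge0 right changed); auto.
Qed.

Lemma right_val_Deadline_cases t s x : 0 <= t -> right_val rho t s ->
  Deadline s x = Deadline (rho t) x \/
  (TrackStatus (rho t) x = Coming /\ Deadline (rho t) x = None /\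
     Deadline s x = Some (t + W dclose dmin)) \/
  (TrackStatus (rho t) x = Empty /\ Deadline s x = None).
Proof.
  intros t_ge0 right; destruct (right_val_exec t s t_ge0 right) as [_ [-> | exec]]; [auto|].
  exact (exec_Deadline_cases _ _ _ _ _ _ _ _ exec x).
Qed.

Lemma right_val_Dir_cases t s : 0 <= t -> right_val rho t s ->
  Dir s = Dir (rho t) \/
  (exists y, Deadline (rho t) y = Some t /\ Dir s = DClose) \/
  (Dir (rho t) = DClose /\ SafeToOpen dopen t (rho t) /\ Dir s = DOpen).
Proof.
  intros t_ge0 right; destruct (right_val_exec t s t_ge0 right) as [_ [-> | exec]]; [auto|].
  exact (exec_Dir_cases _ _ _ _ _ _ _ _ exec).
Qed.

Lemma left_val_internal t s : 0 < t -> left_val rho t s ->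
  Deadline s = Deadline (rho t) /\ Dir s = Dir (rho t).
Proof.
  intros t_pos left; destruct (classic (s = rho t)) as [-> | changed]; [auto|].
  destruct rho_run as [_ [_ step]]; destruct (step t s t_pos left changed) as [? [? _]]; auto.
Qed.

Definition deadline_inv t x : Prop :=
  forall d, Deadline (rho t) x = Some d ->
    d - W dclose dmin <= t /\
    forall w, d - W dclose dmin <= w < d + dclose -> TrackStatus (rho w) x = Coming.

Definition coming_before t x : Prop :=
  exists eta, 0 < eta /\ forall w, t - eta < w < t -> TrackStatus (rho w) x = Coming.

(* Because the Controller is immediate, a coming track lacks a deadline only at the very
   instant its coming phase starts. *)
Definition pending_fresh t x : Prop :=
  TrackStatus (rho t) x = Coming -> Deadline (rho t) x = None -> ~ coming_before t x.

Definition run_inv t : Prop := forall x, deadline_inv t x /\ pending_fresh t x.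

Lemma fresh_coming_lasts t x : 0 <= t -> pending_fresh t x ->
  TrackStatus (rho t) x = Coming -> Deadline (rho t) x = None ->
  forall w, t <= w < t + dmin -> TrackStatus (rho w) x = Coming.
Proof.
  intros t_ge0 fresh coming none w w_range.
  destruct (train_motion_coming_phase Tracks dmin dmax rho x t ltac:(lra) (rho_trains x)
              t_ge0 coming) as [c [e [t_in [long phase]]]].
  destruct (Rle_lt_or_eq_dec c t (proj1 t_in)) as [c_lt_t | <-].
  - exfalso; apply (fresh coming none); exists (t - c); split; [lra|].
    intros v v_range; apply phase; lra.
  - apply phase; lra.
Qed.

Lemma Controller_consistent_inv t : run_inv t ->
  consistent (updates dclose dopen dmin Controller t (rho t)).
Proof.
  intros inv; apply Controller_consistent; [exact dopen_pos|].
  intros y due; destruct (proj1 (inv y) t due) as [_ coming].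
  rewrite (coming t) by (unfold W; lra); discriminate.
Qed.

(* An immediate Controller gives every coming track a deadline at once. *)
Lemma no_pending_after t s x : 0 <= t ->
  consistent (updates dclose dopen dmin Controller t (rho t)) -> right_val rho t s ->
  TrackStatus s x = Coming -> Deadline s x = None -> False.
Proof.
  intros t_ge0 cons right coming none.
  destruct (right_val_exec t s t_ge0 right) as [same_status _].
  rewrite same_status in coming.
  destruct (right_val_Deadline_cases t s x t_ge0 right)
    as [same | [[_ [_ set]] | [empty _]]]; [| congruence | congruence].
  rewrite same in none.
  assert (set_update : updates dclose dopen dmin Controller t (rho t)
                         (LDeadline x) (VDeadline (Some (t + W dclose dmin)))).
  { left; exists x; left; repeat split; assumption. }
  assert (enabled : enabled_at dclose dopen dmin Controller t (rho t)).
  { split; [exact cons|]; exists (LDeadline x), (VDeadline (Some (t + W dclose dmin))).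
    split; [exact set_update|]; simpl; rewrite none; discriminate. }
  destruct (Controller_immediate t t_ge0 enabled) as [fired [s' [right' changed]]].
  rewrite <- (right_val_unique _ _ _ _ _ right right') in changed.
  destruct rho_run as [_ [step _]]; destruct (step t s t_ge0 right changed) as [exec _].
  pose proof (exec_content_update _ _ _ _ _ _ _ _ exec _ _ _ fired cons set_update) as new.
  simpl in new; congruence.
Qed.

Lemma run_inv_0 : run_inv 0.
Proof.
  intros x; destruct (rho_initial x) as [empty none]; split.
  - intros d due; congruence.
  - intros coming; congruence.
Qed.

Lemma run_inv_left t : 0 < t -> (forall w, 0 <= w < t -> run_inv w) -> run_inv t.
Proof.
  intros t_pos IH x.
  destruct (pre_run_left_val _ rho (proj1 rho_run) t t_pos) as [s left].
  destruct (left_val_internal t s t_pos left) as [same_deadline _].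
  destruct left as [eps [eps_pos rho_s]].
  assert (near_t : forall a, a < t -> exists w, a < w < t /\ t - eps < w /\ 0 <= w).
  { intros a a_lt.
    pose proof (Rmax_l a (Rmax (t - eps) 0)); pose proof (Rmax_r a (Rmax (t - eps) 0)).
    pose proof (Rmax_l (t - eps) 0); pose proof (Rmax_r (t - eps) 0).
    assert (Rmax a (Rmax (t - eps) 0) < t)
      by (apply Rmax_lub_lt; [exact a_lt | apply Rmax_lub_lt; lra]).
    exists ((Rmax a (Rmax (t - eps) 0) + t) / 2); lra. }
  split.
  - intros d due; rewrite <- same_deadline in due.
    destruct (near_t (t - eps) ltac:(lra)) as [w w_range].
    rewrite <- (rho_s w) in due by lra.
    destruct (proj1 (IH w ltac:(lra) x) d due) as [started coming].
    split; [lra | exact coming].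
  - intros coming none [eta [eta_pos coming_before_t]].
    destruct (near_t (t - eta) ltac:(lra)) as [w w_range].
    apply (proj2 (IH w ltac:(lra) x)).
    + apply coming_before_t; lra.
    + rewrite (rho_s w) by lra; congruence.
    + exists (w - (t - eta)); split; [lra|].
      intros v v_range; apply coming_before_t; lra.
Qed.

Lemma run_inv_right t : 0 <= t -> (forall w, 0 <= w <= t -> run_inv w) ->
  exists eps, 0 < eps /\ forall w, t < w < t + eps -> run_inv w.
Proof.
  intros t_ge0 IH.
  destruct (pre_run_right_val _ rho (proj1 rho_run) t t_ge0) as [s right].
  pose proof right as [eps [eps_pos rho_s]].
  assert (inv_t : run_inv t) by (apply IH; lra).
  pose proof (Controller_consistent_inv t inv_t) as cons.
  exists eps; split; [exact eps_pos|]; intros w w_range x.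
  unfold deadline_inv, pending_fresh; rewrite (rho_s w w_range); split.
  - intros d due.
    destruct (right_val_Deadline_cases t s x t_ge0 right)
      as [same | [[coming [none set]] | [_ cleared]]]; [| | congruence].
    + rewrite same in due; destruct (proj1 (inv_t x) d due) as [started coming].
      split; [lra | exact coming].
    + rewrite set in due; injection due as <-; unfold W in *; split; [lra|].
      intros v v_range; apply (fresh_coming_lasts t x t_ge0 (proj2 (inv_t x)) coming none).
      lra.
  - intros coming none; exfalso; exact (no_pending_after t s x t_ge0 cons right coming none).
Qed.

Lemma run_invariant t : 0 <= t -> run_inv t.
Proof.
  apply real_induction; [exact run_inv_0 | exact run_inv_left | exact run_inv_right].
Qed.

Lemma Dir_set_to_close_due alpha : 0 <= alpha -> Dir_set_to rho DClose alpha ->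
  exists s y, right_val rho alpha s /\ Dir s = DClose /\ Deadline (rho alpha) y = Some alpha.
Proof.
  intros alpha_ge0 [[alpha_pos [s [left [open closed]]]] | [not_closed [s [right closed]]]].
  - destruct (left_val_internal alpha s alpha_pos left) as [_ same]; congruence.
  - destruct (right_val_Dir_cases alpha s alpha_ge0 right)
      as [same | [[y [due _]] | [_ [_ opened]]]]; [congruence | | congruence].
    now exists s, y.
Qed.

Lemma Dir_close_window alpha s y : 0 <= alpha ->
  right_val rho alpha s -> Dir s = DClose -> Deadline (rho alpha) y = Some alpha ->
  forall u, alpha < u < alpha + dclose -> Dir (rho u) = DClose.
Proof.
  intros alpha_ge0 right closed due.
  destruct (proj1 (run_invariant alpha alpha_ge0 y) alpha due) as [_ coming].
  assert (keeps_due : forall t s', 0 <= t -> alpha <= t < alpha + dclose ->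
            Deadline (rho t) y = Some alpha -> right_val rho t s' -> Deadline s' y = Some alpha).
  { intros t s' t_ge0 t_range due_t right'.
    assert (coming_t : TrackStatus (rho t) y = Coming) by (apply coming; unfold W; lra).
    destruct (right_val_Deadline_cases t s' y t_ge0 right')
      as [same | [[_ [none _]] | [empty _]]]; congruence. }
  set (P t := alpha < t < alpha + dclose ->
              Dir (rho t) = DClose /\ Deadline (rho t) y = Some alpha).
  enough (window : forall t, 0 <= t -> P t) by (intros u u_range; apply (window u); lra).
  apply real_induction; unfold P.
  - lra.
  - intros t t_pos IH t_range.
    destruct (pre_run_left_val _ rho (proj1 rho_run) t t_pos) as [s' left].
    destruct (left_val_internal t s' t_pos left) as [same_deadline same_dir].
    destruct left as [eps [eps_pos rho_s']].
    pose proof (Rmax_l (t - eps / 2) ((alpha + t) / 2));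
    pose proof (Rmax_r (t - eps / 2) ((alpha + t) / 2)).
    set (w := Rmax (t - eps / 2) ((alpha + t) / 2)) in *.
    assert (w < t) by (apply Rmax_lub_lt; lra).
    destruct (IH w ltac:(lra) ltac:(lra)) as [closed_w due_w].
    rewrite (rho_s' w) in closed_w, due_w by lra.
    rewrite <- same_dir, <- same_deadline; auto.
  - intros t t_ge0 IH.
    destruct (Rlt_le_dec t alpha) as [before | after].
    { exists (alpha - t); split; [lra|]; intros w w_range; lra. }
    destruct (Rle_lt_dec (alpha + dclose) t) as [past | inside].
    { exists 1; split; [lra|]; intros w w_range; lra. }
    destruct (pre_run_right_val _ rho (proj1 rho_run) t t_ge0) as [s' right'].
    assert (state_t : Deadline (rho t) y = Some alpha /\ Dir s' = DClose).
    { destruct (Rle_lt_or_eq_dec alpha t after) as [later | <-].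
      - destruct (IH t ltac:(lra) ltac:(lra)) as [closed_t due_t]; split; [exact due_t|].
        destruct (right_val_Dir_cases t s' t_ge0 right')
          as [same | [[_ [_ closes]] | [_ [safe _]]]]; [congruence | exact closes |].
        exfalso; refine (due_coming_not_SafeToOpen _ _ _ _ _ _ _ _ _ safe);
          [apply coming; unfold W | exact due_t |]; lra.
      - split; [exact due|]; now rewrite <- (right_val_unique _ _ _ _ _ right right'). }
    destruct state_t as [due_t closed'].
    pose proof right' as [eps [eps_pos rho_s']].
    exists eps; split; [exact eps_pos|]; intros w w_range _.
    rewrite (rho_s' w w_range); split; [exact closed'|].
    exact (keeps_due t s' t_ge0 ltac:(lra) due_t right').
Qed.

End RegularRun.

Theorem mainTheorem12 (Tracks : Type) (dclose dopen dmin dmax : R) :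
  Finite Tracks ->
  0 < dclose -> 0 < dopen -> 0 < dmin -> 0 < dmax ->
  dclose < dmin -> dmin <= dmax ->
  forall (rho : R -> state Tracks) (F : R -> agent -> Prop),
    @regular_run Tracks dclose dopen dmin dmax rho F ->
    forall alpha, 0 <= alpha ->
      @Dir_set_to Tracks rho DClose alpha ->
      forall u, alpha < u < alpha + dclose -> @Dir Tracks (rho u) = DClose.
Proof.
  intros _ dclose_pos dopen_pos _ _ dclose_lt_dmin _ rho F
    [run [initial [trains [Controller_imm _]]]] alpha alpha_ge0 set_close.
  destruct (Dir_set_to_close_due Tracks dclose dopen dmin rho F run alpha alpha_ge0 set_close)
    as [s [y [right [closed due]]]].
  exact (Dir_close_window Tracks dclose dopen dmin dmax dclose_pos dopen_pos dclose_lt_dmin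
           rho F run initial trains Controller_imm alpha s y alpha_ge0 right closed due).
Qed.
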